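(* Let $n\ge 2$, let $T=\{1,\dots,n\}$ and let $\mathcal T$ be a topology on $T$. Fix an integer $k\ge 1$. Let $A,R\subseteq T\setminus\{n\}$ be disjoint sets such that every point of $A$ is old (at stage $k$), every point of $R$ is new (at stage $k$), $R\neq\emptyset$, and $A\cup R$ is a new upper $k$-system of $\mathcal T$. Then $A$ is open in $\mathcal T$.
   Context: For $\alpha\in T$, $\alpha^{*}$ (the covering set of $\alpha$) denotes the smallest open set of $\mathcal T$ containing $\alpha$. For an integer $m\ge 0$, an $m$-system is an open set $P$ of $\mathcal T$ such that $P\setminus\{n\}$ has exactly $m$ points; it is upper if $n\notin P$ and lower if $n\in P$. For fixed $k$, a point $\alpha\neq n$ is called old if $\alpha^{*}$ is an $m$-system for some $m<k$, and new if $\alpha^{*}$ is a $k$-system. A $k$-system is called new if it contains at least one point $p\neq n$ that is not contained in any $m$-system with $m\le k-1$. *)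

From mathcomp Require Import all_boot.
Set Implicit Arguments. Unset Strict Implicit. Unset Printing Implicit Defensive.

(* A topology on a finite type T, given by its family of open sets.
   Since T is finite, closure under binary unions/intersections is
   closure under arbitrary unions/finite intersections. *)
Definition is_topology (T : finType) (tau : {set {set T}}) : Prop :=
  [/\ set0 \in tau, setT \in tau,
      (forall U V, U \in tau -> V \in tau -> U :|: V \in tau) &
      (forall U V, U \in tau -> V \in tau -> U :&: V \in tau)].

Definition is_open (T : finType) (tau : {set {set T}}) (U : {set T}) : Prop :=
  U \in tau.

Definition covering (T : finType) (tau : {set {set T}}) (a : T) : {set T} :=
  \bigcap_(U in tau | a \in U) U.

Definition msystem (T : finType) (tau : {set {set T}}) (top : T)
  (m : nat) (P : {set T}) : Prop :=
  is_open tau P /\ #|P :\ top| = m.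

Definition upper_msystem (T : finType) (tau : {set {set T}}) (top : T)
  (m : nat) (P : {set T}) : Prop :=
  msystem tau top m P /\ top \notin P.

Definition lower_msystem (T : finType) (tau : {set {set T}}) (top : T)
  (m : nat) (P : {set T}) : Prop :=
  msystem tau top m P /\ top \in P.

Definition old_point (T : finType) (tau : {set {set T}}) (top : T)
  (k : nat) (a : T) : Prop :=
  a != top /\ exists m, m < k /\ msystem tau top m (covering tau a).

Definition new_point (T : finType) (tau : {set {set T}}) (top : T)
  (k : nat) (a : T) : Prop :=
  a != top /\ msystem tau top k (covering tau a).

Definition new_ksystem (T : finType) (tau : {set {set T}}) (top : T)
  (k : nat) (P : {set T}) : Prop :=
  msystem tau top k P /\
  exists p, [/\ p \in P, p != top &
    forall m (Q : {set T}), m <= k - 1 -> msystem tau top m Q -> p \notin Q].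

From mathcomp Require Import all_boot.

(* Each a in A has its covering set inside the open set A :|: R.  It cannot
   contain a new point r, for then r^* would lie in a^* and the k points of
   r^* \ {n} would not fit into the fewer than k points of a^* \ {n}.  Hence
   a^* lies in A, and A is the union of the open sets a^*, a in A.  Only the
   openness of A :|: R is used from the system hypotheses. *)

Set Implicit Arguments. Unset Strict Implicit. Unset Printing Implicit Defensive.

Section Covering.

Variables (T : finType) (tau : {set {set T}}).
Hypothesis htau : is_topology tau.

Lemma open_bigcup (I : finType) (P : pred I) (F : I -> {set T}) :
  (forall i, P i -> F i \in tau) -> \bigcup_(i | P i) F i \in tau.
Proof. by case: htau => h0 _ hU _; apply: (big_ind (fun U => U \in tau)). Qed.

Lemma covering_open a : covering tau a \in tau.
Proof.
case: htau => _ hT _ hI.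
by apply: (big_ind (fun U => U \in tau)) => // U /andP [].
Qed.

Lemma mem_covering a : a \in covering tau a.
Proof. by apply/bigcapP => U /andP []. Qed.

Lemma covering_min U a : U \in tau -> a \in U -> covering tau a \subset U.
Proof. by move=> hU aU; apply: bigcap_inf; rewrite hU aU. Qed.

Lemma covering_subset x a :
  x \in covering tau a -> covering tau x \subset covering tau a.
Proof. exact/covering_min/covering_open. Qed.

Lemma open_covering_sub (A : {set T}) :
  {in A, forall a, covering tau a \subset A} -> A \in tau.
Proof.
move=> subA; have -> : A = \bigcup_(a in A) covering tau a.
  apply/setP => x; apply/idP/bigcupP => [xA | [a aA]].
    by exists x => //; apply: mem_covering.
  exact: subsetP (subA a aA) x.
by apply: open_bigcup => a _; apply: covering_open.
Qed.

Lemma new_point_notin_covering_old (top : T) k a x :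
  old_point tau top k a -> new_point tau top k x -> x \notin covering tau a.
Proof.
move=> [_ [m [ltmk [_ card_a]]]] [_ [_ card_x]]; apply/negP => /covering_subset.
by move=> /(setSD [set top]) /subset_leq_card; rewrite card_a card_x leqNgt ltmk.
Qed.

End Covering.

Theorem lemma1 (n : nat) (hn : 2 <= n) (top : 'I_n) (htop : val top = n.-1)
  (tau : {set {set 'I_n}}) (htau : is_topology tau) (k : nat) (hk : 1 <= k)
  (A R : {set 'I_n}) :
  top \notin A -> top \notin R -> [disjoint A & R] ->
  (forall a, a \in A -> old_point tau top k a) ->
  (forall r, r \in R -> new_point tau top k r) ->
  R != set0 ->
  new_ksystem tau top k (A :|: R) -> upper_msystem tau top k (A :|: R) ->
  is_open tau A.
Proof.
move=> _ _ _ oldA newR _ _ [[openAR _] _].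
apply: (open_covering_sub htau) => a aA; apply/subsetP => x xa.
have aAR : a \in A :|: R by rewrite inE aA.
have /setUP [//|xR] := subsetP (covering_min openAR aAR) x xa.
by have := new_point_notin_covering_old htau (oldA a aA) (newR x xR); rewrite xa.
Qed.
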